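(* Let $p,q\geq1$ be integers, $\alpha_0=\arctan\sqrt{q/p}$ and $P_1=(\alpha_0,\alpha_0+\pi)$. Let $(\vartheta(s),\alpha(s))$ be a trajectory of the differential system $$\dot\vartheta=3\sin\vartheta\cos\vartheta\sin(\alpha-\vartheta),\qquad \dot\alpha=q\cos\alpha\cos\vartheta-p\sin\alpha\sin\vartheta,$$ and suppose that for some $s_0$ one has $0<\vartheta(s_0)<\pi/2$ and $\vartheta(s_0)+\pi/2\leq\alpha(s_0)\leq\vartheta(s_0)+3\pi/2$. Then $\lim_{s\to-\infty}(\vartheta(s),\alpha(s))=P_1$. *)

From Stdlib Require Import Reals.
From Coquelicot Require Import Coquelicot.
Open Scope R_scope.

Definition alpha0 (p q : nat) : R := atan (sqrt (INR q / INR p)).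

Definition theta_rhs (th al : R) : R := 3 * sin th * cos th * sin (al - th).
Definition alpha_rhs (p q : nat) (th al : R) : R :=
  INR q * cos al * cos th - INR p * sin al * sin th.

(* With [beta = al - th], the quantity [lyap = cos th ^ p * sin th ^ q * cos beta ^ 3] is
   nondecreasing along trajectories, and [th] never leaves [(0, PI/2)].  The initial condition
   gives [lyap <= 0] at [s0], hence [cos beta <= 0] and [beta] in [[PI/2, 3 PI/2]] for all
   earlier times; [lyap] is even strictly negative somewhere.  Being monotone and bounded,
   [lyap] converges at [-oo], and since it increases at rate at least [lyap ^ 2 * sin beta ^ 2]
   while [sin beta ^ 2] is Lipschitz, [sin beta -> 0], i.e. [beta -> PI].  Finally
   [(sin beta)' = defect + o(1)] with [defect' = o(1)], which forces [defect -> 0], i.e.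
   [th -> alpha0]. *)

From Stdlib Require Import Reals Lra Lia Psatz.
From Coquelicot Require Import Coquelicot.
Open Scope R_scope.

Lemma pow_le_one (x : R) (n : nat) : 0 <= x <= 1 -> x ^ n <= 1.
Proof. intros Hx. rewrite <- (pow1 n). apply pow_incr. lra. Qed.

Lemma pow_le_self (x : R) (n : nat) : 0 <= x <= 1 -> (1 <= n)%nat -> x ^ n <= x.
Proof.
  intros Hx Hn. destruct n as [| n]; [lia |]. simpl.
  pose proof (pow_le_one x n Hx). pose proof (pow_le x n (proj1 Hx)). nra.
Qed.

Lemma pow_pred_mul (x : R) (n : nat) : (1 <= n)%nat -> x ^ n = x ^ Nat.pred n * x.
Proof. intros Hn. destruct n as [| n]; [lia |]. simpl. ring. Qed.

Lemma atan_sqrt_div (a b : R) : 0 < a -> 0 < b -> atan (sqrt (b / a)) = asin (sqrt (b / (a + b))).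
Proof.
  intros Ha Hb.
  assert (Hba : 0 < b / a) by (apply Rdiv_lt_0_compat; lra).
  rewrite <- (asin_sin (atan (sqrt (b / a)))).
  2:{ pose proof (atan_bound (sqrt (b / a))). lra. }
  f_equal. rewrite sin_atan, Rsqr_sqrt by lra.
  rewrite <- sqrt_div by lra. f_equal. field. lra.
Qed.

Lemma is_derive_chain (g f : R -> R) (x dg df : R) :
  is_derive g (f x) dg -> is_derive f x df -> is_derive (fun t => g (f t)) x (dg * df).
Proof.
  intros Hg Hf. rewrite Rmult_comm. exact (is_derive_comp g f x dg df Hg Hf).
Qed.

Lemma is_derive_eq (f : R -> R) (x l l' : R) : is_derive f x l -> l = l' -> is_derive f x l'.
Proof. now intros H <-. Qed.

Lemma is_derive_Rmult (f g : R -> R) (x df dg : R) :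
  is_derive f x df -> is_derive g x dg ->
  is_derive (fun t => f t * g t) x (df * g x + f x * dg).
Proof. intros Hf Hg. apply (is_derive_mult f g x df dg Hf Hg). intros; apply Rmult_comm. Qed.

Lemma is_derive_Rminus (f g : R -> R) (x df dg : R) :
  is_derive f x df -> is_derive g x dg -> is_derive (fun t => f t - g t) x (df - dg).
Proof. intros Hf Hg. exact (is_derive_minus f g x df dg Hf Hg). Qed.

Lemma continuity_of_is_derive (f df : R -> R) :
  (forall x, is_derive f x (df x)) -> continuity f.
Proof.
  intros H x. apply continuity_pt_filterlim, (ex_derive_continuous f x).
  exists (df x). apply H.
Qed.

Lemma continuous_asin (x : R) : -1 < x < 1 -> continuous asin x.
Proof.
  intros Hx. apply continuity_pt_filterlim, derivable_continuous_pt, derivable_pt_asin, Hx.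
Qed.

Lemma MVT_lower_bound (f df : R -> R) (a b m : R) :
  (forall x, a <= x <= b -> is_derive f x (df x)) ->
  (forall x, a <= x <= b -> m <= df x) -> a <= b -> m * (b - a) <= f b - f a.
Proof.
  intros Hd Hm Hab. destruct (Req_dec a b) as [<- | Hne]; [lra |].
  destruct (MVT_cor2 f df a b) as [c [-> Hc]]; [lra | |].
  - intros c Hc. apply is_derive_Reals, Hd; lra.
  - apply Rmult_le_compat_r; [lra | apply Hm; lra].
Qed.

Lemma MVT_abs_bound (f df : R -> R) (a b M : R) :
  (forall x, a <= x <= b -> is_derive f x (df x)) ->
  (forall x, a <= x <= b -> Rabs (df x) <= M) -> a <= b -> Rabs (f b - f a) <= M * (b - a).
Proof.
  intros Hd HM Hab. apply Rabs_le. split.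
  - replace (- (M * (b - a))) with (- M * (b - a)) by ring.
    apply (MVT_lower_bound f df); auto.
    intros x Hx. specialize (HM x Hx). apply Rabs_le_between in HM. lra.
  - enough (- M * (b - a) <= (- f b) - (- f a)) by lra.
    apply (MVT_lower_bound (fun x => - f x) (fun x => - df x)); auto.
    + intros x Hx. apply (is_derive_opp f), Hd, Hx.
    + intros x Hx. specialize (HM x Hx). apply Rabs_le_between in HM. lra.
Qed.

Lemma nondecreasing_of_derive_nonneg (f df : R -> R) :
  (forall x, is_derive f x (df x)) -> (forall x, 0 <= df x) ->
  forall a b, a <= b -> f a <= f b.
Proof.
  intros Hd Hpos a b Hab.
  enough (0 * (b - a) <= f b - f a) by lra.
  apply (MVT_lower_bound f df); auto.
Qed.

(* Gronwall: [u * exp (c t)] is nondecreasing and [u * exp (- c t)] nonincreasing. *)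
Lemma positive_of_derive_mult_bounded (u g : R -> R) (c s0 : R) :
  (forall x, is_derive u x (u x * g x)) -> (forall x, Rabs (g x) <= c) ->
  (forall x, 0 <= u x) -> 0 < u s0 -> forall s, 0 < u s.
Proof.
  intros Hu Hg Hnn Hu0 s.
  assert (Hw : forall k x, is_derive (fun t => u t * exp (k * t)) x
                                     (u x * exp (k * x) * (g x + k))).
  { intros k x. eapply is_derive_eq.
    - apply (is_derive_Rmult u (fun t => exp (k * t))); [apply Hu |].
      apply (is_derive_chain exp (fun t => k * t)); [apply is_derive_exp |].
      eapply is_derive_eq; [apply is_derive_scal, is_derive_id | apply Rmult_1_r].
    - ring. }
  destruct (Rle_dec s0 s) as [Hle | Hlt].
  - assert (0 * (s - s0) <= u s * exp (c * s) - u s0 * exp (c * s0)).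
    { apply (MVT_lower_bound (fun t => u t * exp (c * t))
               (fun x => u x * exp (c * x) * (g x + c))); auto.
      intros x _. specialize (Hg x). apply Rabs_le_between in Hg.
      pose proof (Hnn x). pose proof (exp_pos (c * x)).
      apply Rmult_le_pos; [apply Rmult_le_pos |]; lra. }
    pose proof (exp_pos (c * s)). pose proof (exp_pos (c * s0)).
    assert (0 < u s0 * exp (c * s0)) by (apply Rmult_lt_0_compat; lra).
    destruct (Hnn s) as [| Hz]; [assumption | rewrite <- Hz in *; lra].
  - assert (0 * (s0 - s) <= - (u s0 * exp (- c * s0)) - - (u s * exp (- c * s))).
    { apply (MVT_lower_bound (fun t => - (u t * exp (- c * t)))
               (fun x => - (u x * exp (- c * x) * (g x + - c)))); [| | lra].
      - intros x _. apply (is_derive_opp (fun t => u t * exp (- c * t))), Hw.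
      - intros x _. specialize (Hg x). apply Rabs_le_between in Hg.
        pose proof (Hnn x). pose proof (exp_pos (- c * x)).
        enough (0 <= u x * exp (- c * x) * (c - g x)) by lra.
        apply Rmult_le_pos; [apply Rmult_le_pos |]; lra. }
    pose proof (exp_pos (- c * s)). pose proof (exp_pos (- c * s0)).
    assert (0 < u s0 * exp (- c * s0)) by (apply Rmult_lt_0_compat; lra).
    destruct (Hnn s) as [| Hz]; [assumption | rewrite <- Hz in *; lra].
Qed.

Lemma nondecreasing_bounded_cauchy_m_infty (f : R -> R) (B : R) :
  (forall a b, a <= b -> f a <= f b) -> (forall s, B <= f s) ->
  forall eps, 0 < eps -> exists T, forall a b, a <= b <= T -> f b - f a < eps.
Proof.
  intros Hm Hb eps He.
  destruct (completeness (fun y => exists s, y = - f s)) as [m [Hub Hlub]].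
  { exists (- B). intros y [s ->]. specialize (Hb s). lra. }
  { exists (- f 0), 0. reflexivity. }
  destruct (Classical_Prop.classic (exists s, m - eps < - f s)) as [[s Hs] | Hn].
  - exists s. intros a b [Hab Hbs].
    assert (- f a <= m) by (apply Hub; exists a; reflexivity).
    pose proof (Hm b s Hbs). lra.
  - exfalso. assert (m <= m - eps); [| lra]. apply Hlub. intros y [s ->].
    apply Rnot_lt_le. intros Hlt. apply Hn. now exists s.
Qed.

(* Barbalat-type: the integral of [h] is controlled by the increase of the bounded monotone
   [F], and an integrable Lipschitz function vanishes at [-oo]. *)
Lemma is_lim_m_infty_0_of_dominated_increase (F dF h dh : R -> R) (B c M T0 : R) :
  0 < c ->
  (forall x, is_derive F x (dF x)) -> (forall x, 0 <= dF x) -> (forall x, B <= F x) ->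
  (forall x, x <= T0 -> c * h x <= dF x) ->
  (forall x, is_derive h x (dh x)) -> (forall x, Rabs (dh x) <= M) -> (forall x, 0 <= h x) ->
  is_lim h m_infty 0.
Proof.
  intros Hc HF HdF HB Hdom Hh Hdh Hnn.
  apply is_lim_spec. intros [eps He]. simpl.
  assert (HM : 0 <= M) by (pose proof (Hdh 0); pose proof (Rabs_pos (dh 0)); lra).
  set (w := eps / (2 * (M + 1))).
  assert (Hw : 0 < w) by (apply Rdiv_lt_0_compat; lra).
  assert (HMw : M * w <= eps / 2).
  { unfold w. apply (Rmult_le_reg_r (2 * (M + 1))); [lra |].
    field_simplify; nra. }
  destruct (nondecreasing_bounded_cauchy_m_infty F B
              (nondecreasing_of_derive_nonneg F dF HF HdF) HB (c * (eps / 2) * w))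
    as [T HT].
  { apply Rmult_lt_0_compat; [apply Rmult_lt_0_compat |]; lra. }
  exists (Rmin T T0). intros t Ht. rewrite Rminus_0_r, Rabs_right by apply Rle_ge, Hnn.
  pose proof (Rmin_l T T0). pose proof (Rmin_r T T0).
  apply Rnot_le_lt. intros Hbig.
  assert (Hhalf : forall u, t - w <= u <= t -> eps / 2 <= h u).
  { intros u Hu.
    pose proof (MVT_abs_bound h dh u t M (fun x _ => Hh x) (fun x _ => Hdh x) (proj2 Hu))
      as Hlip.
    apply Rabs_le_between in Hlip.
    assert (M * (t - u) <= M * w) by (apply Rmult_le_compat_l; lra). lra. }
  assert (Hincr : c * (eps / 2) * (t - (t - w)) <= F t - F (t - w)).
  { apply (MVT_lower_bound F dF); [auto | | lra].
    intros x Hx. eapply Rle_trans; [| apply Hdom; lra].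
    apply Rmult_le_compat_l; [lra | apply Hhalf, Hx]. }
  specialize (HT (t - w) t ltac:(lra)). replace (t - (t - w)) with w in Hincr by ring. lra.
Qed.

Lemma is_lim_m_infty_eventually (f : R -> R) (l eps : R) :
  is_lim f m_infty l -> 0 < eps -> exists T, forall x, x < T -> Rabs (f x - l) < eps.
Proof.
  intros Hf He. apply is_lim_spec in Hf. exact (Hf (mkposreal eps He)).
Qed.

(* Otherwise [g] keeps a sign on a whole unit interval and moves [f] by a fixed amount. *)
Lemma is_lim_m_infty_0_of_slow_drift (f g dg e : R -> R) (l : R) :
  is_lim f m_infty l -> (forall x, is_derive f x (g x + e x)) -> is_lim e m_infty 0 ->
  (forall x, is_derive g x (dg x)) -> is_lim dg m_infty 0 -> is_lim g m_infty 0.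
Proof.
  intros Hf Hdf He Hdg Hdg0.
  apply is_lim_spec. intros [eps Heps]. simpl.
  destruct (is_lim_m_infty_eventually f l (eps / 8) Hf) as [T1 HT1]; [lra |].
  destruct (is_lim_m_infty_eventually e 0 (eps / 4) He) as [T2 HT2]; [lra |].
  destruct (is_lim_m_infty_eventually dg 0 (eps / 4) Hdg0) as [T3 HT3]; [lra |].
  set (T := Rmin T1 (Rmin T2 T3)).
  assert (HT : T <= T1 /\ T <= T2 /\ T <= T3).
  { unfold T. pose proof (Rmin_l T1 (Rmin T2 T3)). pose proof (Rmin_r T1 (Rmin T2 T3)).
    pose proof (Rmin_l T2 T3). pose proof (Rmin_r T2 T3). lra. }
  exists (T - 1). intros a Ha. rewrite Rminus_0_r. apply Rnot_le_lt. intros Hbig.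
  assert (Hsg : exists sg, (sg = 1 \/ sg = -1) /\ eps <= sg * g a).
  { destruct (Rle_dec 0 (g a)).
    - exists 1. rewrite Rabs_right in Hbig by lra. split; [left |]; lra.
    - exists (-1). rewrite Rabs_left in Hbig by lra. split; [right |]; lra. }
  destruct Hsg as [sg [Hsg Hga]].
  assert (Hslope : forall u, a <= u <= a + 1 -> eps / 2 <= sg * (g u + e u)).
  { intros u Hu.
    assert (Hlip : Rabs (g u - g a) <= eps / 4 * (u - a)).
    { apply (MVT_abs_bound g dg); [auto | | lra].
      intros x Hx. rewrite <- (Rminus_0_r (dg x)). apply Rlt_le, HT3. lra. }
    pose proof (HT2 u ltac:(lra)) as Heu. rewrite Rminus_0_r in Heu.
    apply Rabs_le_between in Hlip. apply Rabs_lt_between in Heu.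
    destruct Hsg as [-> | ->]; nra. }
  assert (Hmove : eps / 2 * (a + 1 - a) <= sg * f (a + 1) - sg * f a).
  { apply (MVT_lower_bound (fun x => sg * f x) (fun x => sg * (g x + e x))); [| auto | lra].
    intros x _. apply is_derive_scal, Hdf. }
  pose proof (HT1 a ltac:(lra)) as Hfa. pose proof (HT1 (a + 1) ltac:(lra)) as Hfa1.
  apply Rabs_lt_between in Hfa. apply Rabs_lt_between in Hfa1.
  destruct Hsg as [-> | ->]; lra.
Qed.

Lemma is_lim_m_infty_0_mult_bounded (f b : R -> R) (B : R) :
  is_lim f m_infty 0 -> (forall x, Rabs (b x) <= B) -> is_lim (fun x => f x * b x) m_infty 0.
Proof.
  intros Hf Hb. apply is_lim_spec. intros [eps He]. simpl.
  assert (HB : 0 <= B) by (pose proof (Hb 0); pose proof (Rabs_pos (b 0)); lra).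
  destruct (is_lim_m_infty_eventually f 0 (eps / (B + 1)) Hf) as [T HT].
  { apply Rdiv_lt_0_compat; lra. }
  exists T. intros x Hx. specialize (HT x Hx). rewrite Rminus_0_r in *.
  rewrite Rabs_mult.
  apply Rle_lt_trans with (eps / (B + 1) * B).
  - apply Rmult_le_compat; [apply Rabs_pos | apply Rabs_pos | lra | apply Hb].
  - apply (Rmult_lt_reg_r (B + 1)); [lra |]. field_simplify; nra.
Qed.

Lemma is_lim_0_of_sqr (f : R -> R) (x : Rbar) :
  is_lim (fun y => f y ^ 2) x 0 -> is_lim f x 0.
Proof.
  intros Hf. apply is_lim_spec in Hf. apply is_lim_spec. intros [eps He].
  assert (He2 : 0 < eps ^ 2) by (apply pow_lt, He).
  apply (filter_imp (fun y => Rabs (f y ^ 2 - 0) < eps ^ 2)); [| exact (Hf (mkposreal _ He2))].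
  intros y Hy. cbv beta in *. rewrite Rminus_0_r in *.
  rewrite Rabs_right in Hy by apply Rle_ge, pow2_ge_0.
  rewrite <- (Rabs_right eps) by lra. apply Rsqr_lt_abs_0. rewrite !Rsqr_pow2. exact Hy.
Qed.

Section Trajectory.

Variables (p q : nat) (th al : R -> R).
Hypothesis Hth : forall s, is_derive th s (theta_rhs (th s) (al s)).
Hypothesis Hal : forall s, is_derive al s (alpha_rhs p q (th s) (al s)).
Hypotheses (hp : (1 <= p)%nat) (hq : (1 <= q)%nat).

Definition beta (s : R) : R := al s - th s.

(* [defect] vanishes exactly where [tan th ^ 2 = q / p], i.e. at [th = alpha0 p q]. *)
Definition defect (s : R) : R := INR q * cos (th s) ^ 2 - INR p * sin (th s) ^ 2.

Definition beta_rhs (s : R) : R :=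
  cos (beta s) * defect s - (INR p + INR q + 3) * sin (th s) * cos (th s) * sin (beta s).

Lemma beta_derive (x : R) : is_derive beta x (beta_rhs x).
Proof.
  eapply is_derive_eq; [apply (is_derive_Rminus al th); auto |].
  unfold alpha_rhs, theta_rhs, beta_rhs, defect, beta.
  set (b := al x - th x). replace (al x) with (th x + b) by (unfold b; ring).
  rewrite cos_plus, sin_plus. ring.
Qed.

(* [sin (2 th) ^ 2] has logarithmic derivative [6 cos (2 th) sin beta], so it never vanishes. *)
Lemma theta_in_quadrant (s0 : R) : 0 < th s0 < PI / 2 -> forall s, 0 < th s < PI / 2.
Proof.
  intros Hs0.
  assert (Hpos : forall s, 0 < sin (2 * th s) ^ 2).
  { apply (positive_of_derive_mult_bounded _ (fun s => 6 * cos (2 * th s) * sin (beta s)) 6 s0).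
    - intros x. eapply is_derive_eq.
      + apply (is_derive_pow (fun s => sin (2 * th s))).
        apply (is_derive_chain sin (fun s => 2 * th s)); [apply is_derive_sin |].
        apply is_derive_scal, Hth.
      + unfold theta_rhs, beta. cbn [pow Nat.pred]. rewrite sin_2a. simpl. ring.
    - intros x. rewrite Rabs_mult, Rabs_mult, (Rabs_right 6) by lra.
      pose proof (Rabs_le _ _ (COS_bound (2 * th x))).
      pose proof (Rabs_le _ _ (SIN_bound (beta x))).
      assert (Rabs (cos (2 * th x)) * Rabs (sin (beta x)) <= 1 * 1)
        by (apply Rmult_le_compat; auto using Rabs_pos).
      lra.
    - intros x. apply pow2_ge_0.
    - apply pow_lt, sin_gt_0; lra. }
  assert (Hc : continuity th) by exact (continuity_of_is_derive th _ Hth).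
  intros s. pose proof PI_RGT_0.
  destruct (Rlt_dec 0 (th s)); [destruct (Rlt_dec (th s) (PI / 2)) |].
  - lra.
  - destruct (IVT_gen th s s0 (PI / 2) Hc) as [t [_ Ht]].
    { unfold Rmin, Rmax; destruct Rle_dec; lra. }
    specialize (Hpos t). rewrite Ht in Hpos.
    replace (2 * (PI / 2)) with PI in Hpos by field. rewrite sin_PI in Hpos. simpl in Hpos. lra.
  - destruct (IVT_gen th s s0 0 Hc) as [t [_ Ht]].
    { unfold Rmin, Rmax; destruct Rle_dec; lra. }
    specialize (Hpos t). rewrite Ht, Rmult_0_r, sin_0 in Hpos. simpl in Hpos. lra.
Qed.

Definition lyap (s : R) : R := cos (th s) ^ p * sin (th s) ^ q * cos (beta s) ^ 3.

Definition lyap_rhs (s : R) : R :=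
  3 * (INR p + INR q + 3) * (sin (th s) * cos (th s)) * (cos (th s) ^ p * sin (th s) ^ q)
  * (cos (beta s) * sin (beta s)) ^ 2.

(* The [defect] part of [beta'] cancels the contribution of [th'], leaving a square. *)
Lemma lyap_derive (x : R) : is_derive lyap x (lyap_rhs x).
Proof.
  eapply is_derive_eq.
  - apply (is_derive_Rmult (fun s => cos (th s) ^ p * sin (th s) ^ q)).
    + apply (is_derive_Rmult (fun s => cos (th s) ^ p)); apply (is_derive_pow (fun s => _ (th s)));
        apply (is_derive_chain _ th); auto using is_derive_cos, is_derive_sin.
    + apply (is_derive_pow (fun s => cos (beta s))).
      apply (is_derive_chain cos beta); [apply is_derive_cos | apply beta_derive].
  - unfold lyap_rhs, beta_rhs, defect, theta_rhs, beta. cbn [Nat.pred].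
    rewrite (pow_pred_mul (cos (th x)) p hp), (pow_pred_mul (sin (th x)) q hq).
    replace (INR 3) with 3 by (simpl; ring). ring.
Qed.

Hypothesis Hquad : forall s, 0 < th s < PI / 2.

Lemma sin_cos_theta_bounds (s : R) : 0 < cos (th s) <= 1 /\ 0 < sin (th s) <= 1.
Proof.
  specialize (Hquad s).
  split; (split; [apply cos_gt_0 || apply sin_gt_0; lra | apply COS_bound || apply SIN_bound]).
Qed.

Lemma lyap_rhs_ge0 (x : R) : 0 <= lyap_rhs x.
Proof.
  destruct (sin_cos_theta_bounds x) as [Hc Hs]. pose proof (pos_INR p). pose proof (pos_INR q).
  unfold lyap_rhs.
  apply Rmult_le_pos; [| apply pow2_ge_0]. apply Rmult_le_pos.
  - apply Rmult_le_pos; [lra | apply Rmult_le_pos; lra].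
  - apply Rmult_le_pos; apply pow_le; lra.
Qed.

Lemma lyap_nondecreasing (a b : R) : a <= b -> lyap a <= lyap b.
Proof. apply (nondecreasing_of_derive_nonneg lyap lyap_rhs lyap_derive lyap_rhs_ge0). Qed.

Lemma lyap_ge_m1 (x : R) : -1 <= lyap x.
Proof.
  destruct (sin_cos_theta_bounds x) as [Hc Hs]. unfold lyap.
  assert (0 <= cos (th x) ^ p * sin (th x) ^ q <= 1).
  { pose proof (pow_le_one (cos (th x)) p ltac:(lra)).
    pose proof (pow_le (cos (th x)) p ltac:(lra)).
    pose proof (pow_le_one (sin (th x)) q ltac:(lra)).
    pose proof (pow_le (sin (th x)) q ltac:(lra)).
    split; nra. }
  pose proof (COS_bound (beta x)).
  assert (-1 <= cos (beta x) ^ 3 <= 1) by (simpl; split; nra).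
  nra.
Qed.

Lemma lyap_rhs_ge (x : R) :
  3 * (INR p + INR q + 3) * (lyap x ^ 2 * sin (beta x) ^ 2) <= lyap_rhs x.
Proof.
  destruct (sin_cos_theta_bounds x) as [Hc Hs]. pose proof (pos_INR p). pose proof (pos_INR q).
  unfold lyap, lyap_rhs.
  set (c := cos (th x)) in *. set (s := sin (th x)) in *.
  set (C := cos (beta x)). set (S := sin (beta x)).
  pose proof (pow_le_self c p ltac:(lra) hp). pose proof (pow_le c p ltac:(lra)).
  pose proof (pow_le_self s q ltac:(lra) hq). pose proof (pow_le s q ltac:(lra)).
  assert (HC : 0 <= C ^ 2 * C ^ 2 <= 1).
  { pose proof (COS_bound (beta x)) as HCb. fold C in HCb.
    assert (C * C <= 1) by nra. simpl. split; nra. }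
  replace ((c ^ p * s ^ q * C ^ 3) ^ 2 * S ^ 2)
    with ((c ^ p * s ^ q * (C * S) ^ 2) * (c ^ p * s ^ q * (C ^ 2 * C ^ 2))) by ring.
  replace (3 * (INR p + INR q + 3) * (s * c) * (c ^ p * s ^ q) * (C * S) ^ 2)
    with (3 * (INR p + INR q + 3) * ((c ^ p * s ^ q * (C * S) ^ 2) * (s * c))) by ring.
  apply Rmult_le_compat_l; [lra |].
  apply Rmult_le_compat_l.
  - apply Rmult_le_pos; [apply Rmult_le_pos | apply pow2_ge_0]; lra.
  - replace (s * c) with (c * s * 1) by ring.
    apply Rmult_le_compat; try lra; apply Rmult_le_pos || apply Rmult_le_compat; lra.
Qed.

Lemma lyap_factor_pos (s : R) : 0 < cos (th s) ^ p * sin (th s) ^ q.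
Proof.
  destruct (sin_cos_theta_bounds s). apply Rmult_lt_0_compat; apply pow_lt; lra.
Qed.

Lemma cos_beta_nonpos_iff_lyap (s : R) : cos (beta s) <= 0 <-> lyap s <= 0.
Proof.
  pose proof (lyap_factor_pos s) as Hf. unfold lyap. split; intros H.
  - assert (Hcube : 0 <= (- cos (beta s)) ^ 3) by (apply pow_le; lra).
    replace ((- cos (beta s)) ^ 3) with (- cos (beta s) ^ 3) in Hcube by ring. nra.
  - apply Rnot_lt_le. intros Hc.
    pose proof (Rmult_lt_0_compat _ _ Hf (pow_lt _ 3 Hc)). lra.
Qed.

Lemma beta_range (s0 : R) : PI / 2 <= beta s0 <= 3 * PI / 2 ->
  forall s, s <= s0 -> PI / 2 <= beta s <= 3 * PI / 2.
Proof.
  intros Hs0.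
  assert (Hcos : forall s, s <= s0 -> cos (beta s) <= 0).
  { intros s Hs. apply cos_beta_nonpos_iff_lyap.
    eapply Rle_trans; [apply lyap_nondecreasing, Hs |].
    apply cos_beta_nonpos_iff_lyap, cos_le_0; lra. }
  assert (Hcont : continuity beta) by exact (continuity_of_is_derive beta _ beta_derive).
  (* Leaving the range means [cos (beta s) > 0] or crossing [0] or [2 PI]. *)
  intros s Hs. pose proof PI_RGT_0.
  assert (Hivt : forall y, Rmin (beta s) (beta s0) <= y <= Rmax (beta s) (beta s0) ->
            cos y <= 0).
  { intros y Hy. destruct (IVT_gen beta s s0 y Hcont Hy) as [t [Ht <-]].
    apply Hcos. unfold Rmin, Rmax in Ht. destruct Rle_dec; lra. }
  split; apply Rnot_lt_le; intros Hout.
  - destruct (Rle_dec (beta s) (- (PI / 2))).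
    + pose proof (Hivt 0 ltac:(unfold Rmin, Rmax; destruct Rle_dec; lra)) as Hc.
      rewrite cos_0 in Hc. lra.
    + pose proof (cos_gt_0 (beta s) ltac:(lra) ltac:(lra)). pose proof (Hcos s Hs). lra.
  - destruct (Rle_dec (5 * PI / 2) (beta s)).
    + pose proof (Hivt (2 * PI) ltac:(unfold Rmin, Rmax; destruct Rle_dec; lra)) as Hc.
      rewrite cos_2PI in Hc. lra.
    + pose proof (cos_gt_0 (beta s - 2 * PI) ltac:(lra) ltac:(lra)) as Hc.
      rewrite cos_minus, cos_2PI, sin_2PI in Hc. pose proof (Hcos s Hs). lra.
Qed.

(* If [lyap] vanished on a half-line, so would [cos beta]; but where [cos beta = 0] the
   derivative of [cos beta] is [(p + q + 3) sin th cos th > 0]. *)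
Lemma exists_lyap_neg (s0 : R) : lyap s0 <= 0 -> exists s1, s1 <= s0 /\ lyap s1 < 0.
Proof.
  intros Hs0. apply Classical_Prop.NNPP. intros Hnone.
  assert (Hz : forall s, s <= s0 -> cos (beta s) = 0).
  { intros s Hs.
    assert (Hle : lyap s <= 0) by (eapply Rle_trans; [apply lyap_nondecreasing, Hs | exact Hs0]).
    assert (Hl : lyap s = 0).
    { apply Rle_antisym; [exact Hle |]. apply Rnot_lt_le. intros Hneg.
      apply Hnone. now exists s. }
    unfold lyap in Hl. apply Rmult_integral in Hl as [Hf | Hc].
    - pose proof (lyap_factor_pos s). lra.
    - destruct (Req_dec (cos (beta s)) 0) as [| Hne]; [assumption |].
      exfalso. exact (pow_nonzero _ 3 Hne Hc). }
  set (x := s0 - 1).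
  assert (Hd : is_derive (fun s => cos (beta s)) x (- sin (beta x) * beta_rhs x)).
  { apply (is_derive_chain cos beta); [apply is_derive_cos | apply beta_derive]. }
  assert (Hd0 : is_derive (fun s => cos (beta s)) x 0).
  { apply (is_derive_ext_loc (fun _ => 0)); [| apply (is_derive_const 0)].
    exists (mkposreal 1 Rlt_0_1). intros y Hy.
    apply Rabs_lt_between' in Hy. symmetry. apply Hz. unfold x in Hy. simpl in Hy. lra. }
  pose proof (is_derive_unique _ _ _ Hd) as E. rewrite (is_derive_unique _ _ _ Hd0) in E.
  assert (Hsin : sin (beta x) ^ 2 = 1).
  { pose proof (sin2_cos2 (beta x)) as E2. rewrite (Hz x) in E2 by (unfold x; lra).
    unfold Rsqr in E2. simpl. lra. }
  unfold beta_rhs in E. rewrite (Hz x) in E by (unfold x; lra).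
  destruct (sin_cos_theta_bounds x) as [Hc Hs].
  pose proof (pos_INR p). pose proof (pos_INR q).
  assert (0 < (INR p + INR q + 3) * (sin (th x) * cos (th x))).
  { apply Rmult_lt_0_compat; [lra | apply Rmult_lt_0_compat; lra]. }
  replace (- sin (beta x) * (0 * defect x
             - (INR p + INR q + 3) * sin (th x) * cos (th x) * sin (beta x)))
    with ((INR p + INR q + 3) * (sin (th x) * cos (th x)) * sin (beta x) ^ 2) in E by ring.
  rewrite Hsin in E. lra.
Qed.

Lemma defect_combination_bound (x u v : R) : Rabs u <= 1 -> Rabs v <= 1 ->
  Rabs (u * defect x - (INR p + INR q + 3) * sin (th x) * cos (th x) * v)
    <= 2 * INR p + 2 * INR q + 3.
Proof.
  intros Hu Hv.
  destruct (sin_cos_theta_bounds x) as [Hc Hs]. pose proof (pos_INR p). pose proof (pos_INR q).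
  assert (Hd : Rabs (defect x) <= INR p + INR q).
  { assert (0 <= cos (th x) ^ 2 <= 1) by (simpl; split; nra).
    assert (0 <= sin (th x) ^ 2 <= 1) by (simpl; split; nra).
    assert (INR q * cos (th x) ^ 2 <= INR q * 1) by (apply Rmult_le_compat_l; lra).
    assert (INR p * sin (th x) ^ 2 <= INR p * 1) by (apply Rmult_le_compat_l; lra).
    assert (0 <= INR q * cos (th x) ^ 2) by (apply Rmult_le_pos; lra).
    assert (0 <= INR p * sin (th x) ^ 2) by (apply Rmult_le_pos; lra).
    unfold defect. apply Rabs_le. lra. }
  assert (Hsc : 0 <= sin (th x) * cos (th x) <= 1) by (split; nra).
  eapply Rle_trans; [apply Rabs_triang |]. rewrite Rabs_Ropp, !Rabs_mult.
  rewrite (Rabs_right (INR p + INR q + 3)), (Rabs_right (sin (th x))), (Rabs_right (cos (th x)))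
    by lra.
  assert (Rabs u * Rabs (defect x) <= 1 * (INR p + INR q))
    by (apply Rmult_le_compat; auto using Rabs_pos).
  assert ((INR p + INR q + 3) * (sin (th x) * cos (th x)) * Rabs v <= (INR p + INR q + 3) * 1 * 1)
    by (apply Rmult_le_compat; try apply Rmult_le_compat_l; auto using Rabs_pos; nra).
  nra.
Qed.

Lemma beta_rhs_bound (x : R) : Rabs (beta_rhs x) <= 2 * INR p + 2 * INR q + 3.
Proof.
  apply defect_combination_bound; apply Rabs_le; [apply COS_bound | apply SIN_bound].
Qed.

(* [lyap] increases by at least a multiple of [sin beta ^ 2] once it is negative. *)
Lemma sin_beta_sqr_lim (s1 : R) : lyap s1 < 0 -> is_lim (fun s => sin (beta s) ^ 2) m_infty 0.
Proof.
  intros Hs1. pose proof (pos_INR p). pose proof (pos_INR q).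
  apply (is_lim_m_infty_0_of_dominated_increase lyap lyap_rhs _
           (fun s => sin (2 * beta s) * beta_rhs s)
           (-1) (3 * (INR p + INR q + 3) * lyap s1 ^ 2) (2 * INR p + 2 * INR q + 3) s1).
  - apply Rmult_lt_0_compat; [lra | apply pow2_gt_0; lra].
  - exact lyap_derive.
  - exact lyap_rhs_ge0.
  - exact lyap_ge_m1.
  - intros x Hx. eapply Rle_trans; [| apply lyap_rhs_ge].
    pose proof (lyap_nondecreasing x s1 Hx).
    assert (lyap s1 ^ 2 <= lyap x ^ 2) by (simpl; nra).
    rewrite Rmult_assoc. apply Rmult_le_compat_l; [lra |].
    apply Rmult_le_compat_r; [apply pow2_ge_0 | assumption].
  - intros x. eapply is_derive_eq.
    + apply (is_derive_pow (fun s => sin (beta s))).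
      apply (is_derive_chain sin beta); [apply is_derive_sin | apply beta_derive].
    + cbn [Nat.pred]. rewrite sin_2a. replace (INR 2) with 2 by (simpl; ring). ring.
  - intros x. rewrite Rabs_mult, <- (Rmult_1_l (2 * INR p + 2 * INR q + 3)).
    apply Rmult_le_compat; auto using Rabs_pos, beta_rhs_bound.
    apply Rabs_le, SIN_bound.
  - intros x. apply pow2_ge_0.
Qed.

Lemma sin_beta_lim (s1 : R) : lyap s1 < 0 -> is_lim (fun s => sin (beta s)) m_infty 0.
Proof. intros Hs1. exact (is_lim_0_of_sqr _ _ (sin_beta_sqr_lim s1 Hs1)). Qed.

Lemma beta_lim (s0 : R) :
  (forall s, s <= s0 -> PI / 2 <= beta s <= 3 * PI / 2) ->
  is_lim (fun s => sin (beta s)) m_infty 0 -> is_lim beta m_infty PI.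
Proof.
  intros Hrange Hsin.
  apply (is_lim_ext_loc (fun s => PI - asin (sin (beta s)))).
  { exists s0. intros y Hy. specialize (Hrange y (Rlt_le _ _ Hy)).
    rewrite <- sin_PI_x, asin_sin by lra. ring. }
  replace (Finite PI) with (Finite (PI - asin 0)) by (rewrite asin_0, Rminus_0_r; reflexivity).
  apply is_lim_minus'; [apply is_lim_const |].
  apply (is_lim_comp_continuous (fun s => sin (beta s)) asin); [exact Hsin |].
  apply continuous_asin. lra.
Qed.

Lemma defect_lim : is_lim (fun s => sin (beta s)) m_infty 0 -> is_lim defect m_infty 0.
Proof.
  intros Hsin. pose proof (pos_INR p). pose proof (pos_INR q).
  apply (is_lim_m_infty_0_of_slow_drift (fun s => sin (beta s)) defect
           (fun s => sin (beta s) * (- 6 * (INR p + INR q) * (sin (th s) * cos (th s)) ^ 2))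
           (fun s => sin (beta s) * - (sin (beta s) * defect s
              - (INR p + INR q + 3) * sin (th s) * cos (th s) * - cos (beta s))) 0 Hsin).
  - intros x. eapply is_derive_eq.
    + apply (is_derive_chain sin beta); [apply is_derive_sin | apply beta_derive].
    + pose proof (sin2_cos2 (beta x)) as E. unfold Rsqr in E.
      unfold beta_rhs. replace (defect x) with (defect x * 1) at 2 by ring.
      rewrite <- E. ring.
  - apply (is_lim_m_infty_0_mult_bounded _ _ (2 * INR p + 2 * INR q + 3) Hsin).
    intros x. rewrite Rabs_Ropp. apply defect_combination_bound; apply Rabs_le.
    + apply SIN_bound.
    + pose proof (COS_bound (beta x)). lra.
  - intros x. eapply is_derive_eq.
    + apply (is_derive_Rminus (fun s => INR q * cos (th s) ^ 2) (fun s => INR p * sin (th s) ^ 2));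
        apply is_derive_scal, (is_derive_pow (fun s => _ (th s))), (is_derive_chain _ th);
        auto using is_derive_cos, is_derive_sin.
    + unfold theta_rhs, beta. cbn [Nat.pred]. replace (INR 2) with 2 by (simpl; ring). ring.
  - apply (is_lim_m_infty_0_mult_bounded _ _ (6 * (INR p + INR q)) Hsin).
    intros x. destruct (sin_cos_theta_bounds x) as [Hc Hs].
    assert (0 <= (sin (th x) * cos (th x)) ^ 2 <= 1).
    { assert (0 <= sin (th x) * cos (th x) <= 1) by (split; nra). simpl; split; nra. }
    assert (0 <= (INR p + INR q) * (sin (th x) * cos (th x)) ^ 2 <= (INR p + INR q) * 1).
    { split; [apply Rmult_le_pos | apply Rmult_le_compat_l]; lra. }
    apply Rabs_le. lra.
Qed.

Lemma theta_lim : is_lim defect m_infty 0 -> is_lim th m_infty (alpha0 p q).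
Proof.
  intros Hdef.
  assert (HP : 0 < INR p) by (apply lt_0_INR; lia).
  assert (HQ : 0 < INR q) by (apply lt_0_INR; lia).
  set (l := INR q / (INR p + INR q)).
  assert (Hl : 0 < l < 1).
  { unfold l. split; [apply Rdiv_lt_0_compat; lra |].
    apply (Rmult_lt_reg_r (INR p + INR q)); [lra |]. field_simplify; lra. }
  assert (Hsin2 : is_lim (fun s => sin (th s) ^ 2) m_infty l).
  { apply (is_lim_ext (fun s => (INR q - defect s) * / (INR p + INR q))).
    { intros y. unfold defect. pose proof (sin2_cos2 (th y)) as E. unfold Rsqr in E.
      replace (cos (th y) ^ 2) with (1 - sin (th y) ^ 2) by (simpl; lra). field. lra. }
    replace (Finite l) with (Rbar_mult (INR q - 0) (/ (INR p + INR q)))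
      by (simpl; unfold l; f_equal; field; lra).
    apply is_lim_scal_r, is_lim_minus'; [apply is_lim_const | exact Hdef]. }
  unfold alpha0. rewrite atan_sqrt_div by assumption. fold l.
  apply (is_lim_ext (fun s => asin (sqrt (sin (th s) ^ 2)))).
  { intros y. destruct (sin_cos_theta_bounds y) as [Hc Hs]. specialize (Hquad y).
    rewrite sqrt_pow2, asin_sin by lra. reflexivity. }
  apply (is_lim_comp_continuous _ asin).
  - exact (is_lim_comp_continuous _ sqrt _ _ Hsin2 (continuous_sqrt l)).
  - apply continuous_asin.
    pose proof (sqrt_lt_R0 l (proj1 Hl)). pose proof (sqrt_lt_1_alt l 1 ltac:(lra)).
    rewrite sqrt_1 in *. lra.
Qed.

End Trajectory.

Theorem lemma4p11 (p q : nat) (hp : (1 <= p)%nat) (hq : (1 <= q)%nat)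
  (th al : R -> R)
  (Hth : forall s, is_derive th s (theta_rhs (th s) (al s)))
  (Hal : forall s, is_derive al s (alpha_rhs p q (th s) (al s)))
  (s0 : R)
  (H1 : 0 < th s0 < PI / 2)
  (H2 : th s0 + PI / 2 <= al s0 <= th s0 + 3 * PI / 2) :
  is_lim th m_infty (alpha0 p q) /\ is_lim al m_infty (alpha0 p q + PI).
Proof.
  pose proof (theta_in_quadrant th al Hth s0 H1) as Hquad.
  assert (Hbeta0 : PI / 2 <= beta th al s0 <= 3 * PI / 2) by (unfold beta; lra).
  pose proof (beta_range p q th al Hth Hal hp hq Hquad s0 Hbeta0) as Hrange.
  assert (Hlyap0 : lyap p q th al s0 <= 0).
  { apply (cos_beta_nonpos_iff_lyap p q th al Hquad), cos_le_0; lra. }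
  destruct (exists_lyap_neg p q th al Hth Hal hp hq Hquad s0 Hlyap0) as [s1 [_ Hs1]].
  pose proof (sin_beta_lim p q th al Hth Hal hp hq Hquad s1 Hs1) as Hsin.
  pose proof (theta_lim p q th hp hq Hquad (defect_lim p q th al Hth Hal Hquad Hsin))
    as Hlim_th.
  split; [exact Hlim_th |].
  apply (is_lim_ext (fun s => th s + beta th al s)); [intros s; unfold beta; ring |].
  apply is_lim_plus'; [exact Hlim_th | exact (beta_lim th al s0 Hrange Hsin)].
Qed.
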